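(* There is a numerical constant $C>0$ such that the following holds. Let $\delta\in[0,1]$, $h\in(0,1/2]$, $(u,w)\in\mathcal A_\delta$, $E_h=E_h(u,w)$, and let $0<s\le t\le\frac12$. Then \[ \|w'\|_{L^1([0,s])}\le\frac sh E_h^{1/2},\qquad \|w'\|_{L^1([s,t])}\le C\,t^{1/2}\Big(1+\log\frac1s\Big)^{1/4}E_h^{1/4}+2t . \]
   Context: Let $B_1=\{x\in\mathbb R^2:|x|<1\}$. For scalar functions $u,w$ on $(0,1)$ define $U(x)=\frac12(u(|x|)-|x|)\frac{x}{|x|}$ and $W(x)=w(|x|)$. For $\delta\in[0,1]$ let $\mathcal A_\delta$ be the set of pairs $(u,w)$ with $(U,W)\in W^{1,2}(B_1;\mathbb R^2)\times W^{2,2}(B_1)$, $w(0)=0$, $w(1)=1-\delta$. For $h>0$, \[ E_h(u,w)=\int_0^1\frac{u^2}{r}+r(u'+w'^2-1)^2+h^2\Big(rw''^2+\frac{w'^2}{r}\Big)dr . \] *)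

From HB Require Import structures.
From mathcomp Require Import all_boot all_order all_algebra.
From mathcomp Require Import all_classical all_reals all_analysis.
Set Implicit Arguments. Unset Strict Implicit. Unset Printing Implicit Defensive.
Import Order.TTheory GRing.Theory Num.Theory numFieldNormedType.Exports.
Local Open Scope classical_set_scope.
Local Open Scope ring_scope.

Section Defs.
Context {R : realType}.
Local Notation mu := (@lebesgue_measure R).

(* [f] is locally absolutely continuous on (0,1) with a.e. derivative [df]:
   for every compact [a,b] in (0,1), df is integrable there and
   f b - f a = int_a^b df. *)
Definition loc_ac01 (f df : R -> R) : Prop :=
  forall a b : R, 0 < a -> a <= b -> b < 1 ->
    mu.-integrable `[a, b] (EFin \o df) /\
    f b - f a = Rintegral mu `[a, b] df.

(* U(x) = 1/2 (u(|x|) - |x|) x/|x| belongs to W^{1,2}(B_1;R^2), written in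
   polar coordinates: with g = (u - r)/2, |U|^2 = g^2 and
   |grad U|^2 = g'^2 + g^2/r^2, and dx = r dr dtheta. *)
Definition radial_W12 (u du : R -> R) : Prop :=
  mu.-integrable `]0, 1[
    (fun r => (((du r - 1) / 2) ^+ 2 * r
               + ((u r - r) / 2) ^+ 2 / r
               + ((u r - r) / 2) ^+ 2 * r)%:E).

(* W(x) = w(|x|) belongs to W^{2,2}(B_1), written in polar coordinates:
   |D^2 W|^2 = w''^2 + w'^2/r^2, |grad W|^2 = w'^2. *)
Definition radial_W22 (w dw d2w : R -> R) : Prop :=
  mu.-integrable `]0, 1[
    (fun r => ((d2w r) ^+ 2 * r + (dw r) ^+ 2 / r
               + (dw r) ^+ 2 * r + (w r) ^+ 2 * r)%:E).

Definition admissible (delta : R) (u w du dw d2w : R -> R) : Prop :=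
  loc_ac01 u du /\ loc_ac01 w dw /\ loc_ac01 dw d2w /\
  radial_W12 u du /\ radial_W22 w dw d2w /\
  {within `[0%R, 1%R] : set R, continuous w} /\ w 0 = 0 /\ w 1 = 1 - delta.

Definition energy (h : R) (u du dw d2w : R -> R) : \bar R :=
  (\int[mu]_(r in `]0%R, 1%R[)
     ((u r) ^+ 2 / r + r * (du r + (dw r) ^+ 2 - 1) ^+ 2
      + h ^+ 2 * (r * (d2w r) ^+ 2 + (dw r) ^+ 2 / r))%:E)%E.

End Defs.

From HB Require Import structures.
From mathcomp Require Import all_boot all_order all_algebra.
From mathcomp Require Import all_classical all_reals all_analysis.
From mathcomp Require Import ring lra measurable_realfun.
Import Order.TTheory GRing.Theory Num.Theory numFieldNormedType.Exports.
Local Open Scope classical_set_scope.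
Local Open Scope ring_scope.

(* Both estimates are weighted Cauchy-Schwarz inequalities against parts of the
   energy density, obtained from the pointwise AM-GM inequality optimised over
   its parameter.  Near the origin the weight is the bending term h^2 w'^2 / r,
   whose conjugate weight r / h^2 integrates to at most s^2 / h^2.  Away from
   the origin write w'^2 = (u' + w'^2 - 1) - u' + 1 and integrate over an
   interval [a, b] with a in [s/2, s] and b in [t, 3t/2], chosen with the help
   of the term u^2 / r so that |u a|, |u b| <= 2 E^(1/2) + t/4.  The stretching
   term r (u' + w'^2 - 1)^2, with conjugate weight 1 / r, bounds the first piece
   by (E log (b / a))^(1/2) <= (E (1 + log (1 / s)))^(1/2); Cauchy-Schwarz on
   [s, t] turns the resulting L^2 bound on w' into the L^1 bound. *)

Section ge0_le_subset_integral.
Context d (T : measurableType d) (R : realType).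
Variable mu : {measure set T -> \bar R}.

(* Unlike [ge0_le_integral], no measurability is required: the integrals are
   compared through their defining suprema over simple minorants. *)
Lemma ge0_le_subset_integral (D1 D2 : set T) (f g : T -> \bar R) :
  (forall x, D1 x -> 0 <= f x)%E -> (forall x, D2 x -> 0 <= g x)%E ->
  (forall x, D1 x -> D2 x /\ (f x <= g x)%E) ->
  (\int[mu]_(x in D1) f x <= \int[mu]_(x in D2) g x)%E.
Proof.
move=> f0 g0 fg.
rewrite [X in (X <= _)%E]ge0_integralE // [X in (_ <= X)%E]ge0_integralE //.
apply: ereal_sup_le => _ /= [k kle <-]; exists k => // x.
apply: le_trans (kle x) _; rewrite /patch.
case: ifPn => [/set_mem D1x|_]; first by have [D2x fgx] := fg x D1x; rewrite mem_set.
by case: ifPn => [/set_mem D2x|//]; exact: g0.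
Qed.

End ge0_le_subset_integral.

Section amgm.
Context {R : realType}.

Lemma abs_le_weighted_amgm (l p q y : R) : 0 < l -> 0 < p -> p * q = 1 ->
  `|y| <= l / 2 * (p * y ^+ 2) + 1 / (2 * l) * q.
Proof.
move=> l0 p0 pq1.
have -> : q = p^-1 by apply: (mulfI (lt0r_neq0 p0)); rewrite pq1 mulfV ?lt0r_neq0.
rewrite -subr_ge0 -real_normK ?num_real //.
have -> : l / 2 * (p * `|y| ^+ 2) + 1 / (2 * l) * p^-1 - `|y|
    = (l * p * `|y| - 1) ^+ 2 / (2 * l * p).
  by field; rewrite !lt0r_neq0.
by rewrite divr_ge0 ?sqr_ge0 // !mulr_ge0 // ltW.
Qed.

Lemma le_sqrt_of_amgm (X A B : R) : 0 <= A -> 0 <= B ->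
  (forall l, 0 < l -> X <= l / 2 * A + 1 / (2 * l) * B) -> X <= Num.sqrt (A * B).
Proof.
move=> A0 B0 XAB.
have [Az|Ap] := eqVneq A 0.
  rewrite Az mul0r sqrtr0 leNgt; apply/negP => X0.
  have l0 : 0 < (B + 1) / X by rewrite divr_gt0 //; lra.
  have := XAB _ l0; rewrite Az mulr0 add0r.
  have -> : 1 / (2 * ((B + 1) / X)) * B = X * (B / (2 * (B + 1))).
    by field; rewrite !lt0r_neq0 //; lra.
  have : B / (2 * (B + 1)) < 1 by rewrite ltr_pdivrMr; lra.
  nra.
have [Bz|Bp] := eqVneq B 0.
  rewrite Bz mulr0 sqrtr0 leNgt; apply/negP => X0.
  have l0 : 0 < X / (A + 1) by rewrite divr_gt0 //; lra.
  have := XAB _ l0; rewrite Bz mulr0 addr0.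
  have -> : X / (A + 1) / 2 * A = X * (A / (2 * (A + 1))).
    by field; rewrite !lt0r_neq0 //; lra.
  have : A / (2 * (A + 1)) < 1 by rewrite ltr_pdivrMr; lra.
  nra.
have sA : 0 < Num.sqrt A by rewrite sqrtr_gt0 lt0r Ap.
have sB : 0 < Num.sqrt B by rewrite sqrtr_gt0 lt0r Bp.
have := XAB _ (divr_gt0 sB sA).
rewrite -[X in _ * X + _](sqr_sqrtr A0) -[X in _ + _ * X](sqr_sqrtr B0) sqrtrM //.
by have -> : Num.sqrt B / Num.sqrt A / 2 * Num.sqrt A ^+ 2
    + 1 / (2 * (Num.sqrt B / Num.sqrt A)) * Num.sqrt B ^+ 2 = Num.sqrt A * Num.sqrt B
  by field; rewrite !lt0r_neq0.
Qed.

End amgm.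

Section lebesgue.
Context {R : realType}.
Local Notation mu := (@lebesgue_measure R).

Lemma integral_itv_cc_cst (a b k : R) : a <= b ->
  (\int[mu]_(x in `[a, b]) k%:E = (k * (b - a))%:E)%E.
Proof.
move=> ab; rewrite integral_cst // EFinM; congr (_ * _)%E.
change (mu `[a, b] = (b - a)%:E); move: ab; rewrite le_eqVlt => /predU1P[<-|ab].
  by rewrite set_itv1 lebesgue_measure_set1 subrr.
by rewrite lebesgue_measure_itv /= lte_fin ab EFinB.
Qed.

Lemma integrable_itv_cc_cst (a b k : R) : a <= b ->
  mu.-integrable `[a, b] (EFin \o cst k).
Proof.
move=> ab; apply/integrableP; split; first exact/measurable_EFinP.
by rewrite (eq_integral (fun=> `|k|%:E)) // integral_itv_cc_cst // ltry.
Qed.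

Lemma Rintegral_le_integral_abs {D : set R} {f : R -> R} {c : R} :
  measurable D -> mu.-integrable D (EFin \o f) ->
  (\int[mu]_(x in D) (`|f x|)%:E <= c%:E)%E -> \int[mu]_(x in D) f x <= c.
Proof.
move=> mD fi fc; apply: le_trans (ler_norm _) _.
apply: le_trans (le_normr_Rintegral _ _) _ => //.
have fin : (\int[mu]_(x in D) (`|f x|)%:E)%E \is a fin_num.
  by rewrite ge0_fin_numE ?integral_ge0 // (le_lt_trans fc) ?ltry.
by rewrite /Rintegral -lee_fin fineK.
Qed.

Lemma measurable_fun_inv (D : set R) : measurable D -> (forall x, D x -> 0 < x) ->
  measurable_fun D GRing.inv.
Proof.
move=> mD D0; apply: subspace_continuous_measurable_fun => //.
apply: continuous_in_subspaceT => x /set_mem/D0 x0.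
by apply: inv_continuous; rewrite gt_eqF.
Qed.

Lemma integral_itv_inv (a b : R) : 0 < a -> a <= b ->
  (\int[mu]_(x in `[a, b]) (x^-1)%:E = (ln b - ln a)%:E)%E.
Proof.
move=> a0; rewrite le_eqVlt => /predU1P[<-|ab].
  by rewrite set_itv1 integral_set1 subrr.
rewrite (@continuous_FTC2 _ (fun x => x^-1) (@ln R)) ?EFinB //.
- apply: continuous_in_subspaceT => x; rewrite inE /= in_itv /= => /andP[ax _].
  by apply: inv_continuous; rewrite gt_eqF // (lt_le_trans a0).
- split.
  + move=> x; rewrite in_itv /= => /andP[ax _].
    by apply: ex_derive; apply: is_derive1_ln; rewrite (lt_trans a0).
  + by apply: cvg_at_right_filter; apply: continuous_ln.
  + by apply: cvg_at_left_filter; apply: continuous_ln; rewrite (lt_trans a0).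
- move=> x; rewrite in_itv /= => /andP[ax _].
  by rewrite derive1E; have [_ ->] := is_derive1_ln (lt_trans a0 ax).
Qed.

Lemma integral_abs_le_cauchy_schwarz (D : set R) (f p q : R -> R) (A B : R) :
  measurable D -> measurable_fun D f -> measurable_fun D p -> measurable_fun D q ->
  (forall x, D x -> 0 < p x /\ p x * q x = 1) ->
  (\int[mu]_(x in D) (p x * f x ^+ 2)%:E <= A%:E)%E ->
  (\int[mu]_(x in D) (q x)%:E <= B%:E)%E ->
  (\int[mu]_(x in D) (`|f x|)%:E <= (Num.sqrt (A * B))%:E)%E.
Proof.
move=> mD mf mp mq pq IA IB.
have q_ge0 x : D x -> 0 <= q x.
  by move=> /pq[p0 pq1]; rewrite ltW // -(pmulr_rgt0 _ p0) pq1.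
have pf_ge0 x : D x -> 0 <= p x * f x ^+ 2.
  by move=> /pq[p0 _]; rewrite mulr_ge0 ?sqr_ge0 ?ltW.
have mpf : measurable_fun D (fun x => p x * f x ^+ 2).
  by apply: measurable_funM => //; exact: measurable_funX.
have A0 : 0 <= A.
  by rewrite -lee_fin (le_trans _ IA) // integral_ge0 // => x /pf_ge0; rewrite lee_fin.
have B0 : 0 <= B.
  by rewrite -lee_fin (le_trans _ IB) // integral_ge0 // => x /q_ge0; rewrite lee_fin.
set I := (\int[mu]_(x in D) _)%E.
have I0 : (0 <= I)%E by apply: integral_ge0 => x _; rewrite lee_fin.
have le_I l : 0 < l -> (I <= (l / 2 * A + 1 / (2 * l) * B)%:E)%E.
  move=> l0.
  have [c1 c2] : 0 <= l / 2 /\ 0 <= 1 / (2 * l) by split; apply: divr_ge0; lra.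
  apply: (@le_trans _ _ (\int[mu]_(x in D)
      ((l / 2)%:E * (p x * f x ^+ 2)%:E + (1 / (2 * l))%:E * (q x)%:E))%E).
    apply: ge0_le_subset_integral => [x _|x Dx|x Dx]; first by rewrite lee_fin.
      by rewrite -!EFinM -EFinD lee_fin addr_ge0 // mulr_ge0 // ?pf_ge0 ?q_ge0.
    have [p0 pq1] := pq x Dx.
    by split=> //; rewrite -!EFinM -EFinD lee_fin abs_le_weighted_amgm.
  rewrite ge0_integralD //; first last.
  - by apply: emeasurable_funM => //; exact/measurable_EFinP.
  - by move=> x /q_ge0 q0; rewrite -EFinM lee_fin mulr_ge0.
  - by apply: emeasurable_funM => //; exact/measurable_EFinP.
  - by move=> x /pf_ge0 pf0; rewrite -EFinM lee_fin mulr_ge0.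
  rewrite !ge0_integralZl_EFin //; first last.
  - exact/measurable_EFinP.
  - exact/measurable_EFinP.
  by rewrite EFinD !EFinM leeD // lee_wpmul2l // lee_fin.
have If : I \is a fin_num by rewrite ge0_fin_numE // (le_lt_trans (le_I 1 ltr01)) ?ltry.
rewrite -(fineK If) lee_fin; apply: le_sqrt_of_amgm => // l /le_I.
by rewrite -lee_fin fineK.
Qed.

End lebesgue.

Lemma ln_sub_le {R : realType} (s a b : R) : 0 < s -> s / 2 <= a -> a <= b -> b <= 1 ->
  ln b - ln a <= 1 + ln s^-1.
Proof.
move=> s0 sa ab b1.
have lnb : ln b <= 0 by apply: ln_le0.
have lna : ln (s / 2) <= ln a by rewrite ler_ln ?posrE //; lra.
have ln2 : ln (2 : R) <= 1.
  by have := expR_ge1Dx (ln (2 : R)); rewrite lnK ?posrE //; lra.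
rewrite lnV ?posrE // lnM ?posrE ?invr_gt0 // lnV ?posrE // in lna *.
lra.
Qed.

Lemma sqrt_mul_le_of_linear_bound {R : realType} (G x t a : R) : 0 <= x <= t -> 0 <= a ->
  G <= 5 * a + 2 * t -> Num.sqrt (G * x) <= 3 * Num.sqrt t * Num.sqrt a + 2 * t.
Proof.
move=> /andP[x0 xt] a0 Ga; have t0 := le_trans x0 xt.
have Gx : G * x <= (5 * a + 2 * t) * t by nra.
set P := Num.sqrt t; set Q := Num.sqrt a.
have [P0 Q0] : 0 <= P /\ 0 <= Q by rewrite !sqrtr_ge0.
have rhs0 : 0 <= 3 * P * Q + 2 * t by rewrite addr_ge0 ?mulr_ge0.
rewrite -(ger0_norm rhs0) -sqrtr_sqr ler_wsqrtr // (le_trans Gx) //.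
rewrite -(sqr_sqrtr t0) -(sqr_sqrtr a0) -/P -/Q.
have := mulr_ge0 (mulr_ge0 P0 P0) (mulr_ge0 P0 Q0); have := sqr_ge0 (P * Q); nra.
Qed.

Section loc_ac01.
Context {R : realType}.
Variables (f df : R -> R).
Hypothesis f_ac : loc_ac01 f df.

Lemma loc_ac01_measurable (a b : R) : 0 < a -> a <= b -> b < 1 ->
  measurable_fun `[a, b] df.
Proof.
move=> a0 ab b1; have [dfi _] := f_ac _ _ a0 ab b1.
by apply/measurable_EFinP; exact: (measurable_int _ dfi).
Qed.

Lemma loc_ac01_measurable_oc (s : R) : 0 < s -> s < 1 -> measurable_fun `]0, s] df.
Proof.
move=> s0 s1.
have -> : `]0, s]%classic = \bigcup_n `[s / n.+1%:R, s]%classic.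
  apply/seteqP; split => x /=.
    rewrite in_itv /= => /andP[x0 xs].
    exists (Num.truncn (s / x)) => //=.
    have := truncn_itv (ltW (divr_gt0 s0 x0)) => /andP[_ h].
    rewrite in_itv /= xs andbT ler_pdivrMr ?ltr0n //.
    by rewrite ltr_pdivrMr // in h; rewrite mulrC ltW.
  move=> [n _]; rewrite /= !in_itv /= => /andP[h xs]; apply/andP; split => //.
  by apply: lt_le_trans h; apply: divr_gt0.
apply/measurable_fun_bigcup => // n.
apply: loc_ac01_measurable s1; first exact: divr_gt0.
by rewrite ler_pdivrMr ?ltr0n // ler_peMr ?ler1n ?ltW.
Qed.

End loc_ac01.
Arguments loc_ac01_measurable {R f df} f_ac {a b}.
Arguments loc_ac01_measurable_oc {R f df} f_ac {s}.

Section energy_bounds.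
Context {R : realType}.
Local Notation mu := (@lebesgue_measure R).
Variables (delta h : R) (u w du dw d2w : R -> R).
Hypothesis adm : admissible delta u w du dw d2w.
Hypothesis energy_fin : (energy h u du dw d2w < +oo)%E.
Hypothesis h_gt0 : 0 < h.

Let density (r : R) := u r ^+ 2 / r + r * (du r + dw r ^+ 2 - 1) ^+ 2
  + h ^+ 2 * (r * d2w r ^+ 2 + dw r ^+ 2 / r).
Let E := fine (energy h u du dw d2w).

Lemma density_terms_le {r : R} : 0 < r ->
  [/\ u r ^+ 2 / r <= density r,
      r * (du r + dw r ^+ 2 - 1) ^+ 2 <= density r &
      h ^+ 2 * (dw r ^+ 2 / r) <= density r].
Proof.
move=> r0.
have t1 : 0 <= u r ^+ 2 / r by rewrite divr_ge0 ?sqr_ge0 ?ltW.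
have t2 : 0 <= r * (du r + dw r ^+ 2 - 1) ^+ 2 by rewrite mulr_ge0 ?sqr_ge0 ?ltW.
have t3 : 0 <= h ^+ 2 * (r * d2w r ^+ 2).
  exact: mulr_ge0 (sqr_ge0 _) (mulr_ge0 (ltW r0) (sqr_ge0 _)).
have t4 : 0 <= h ^+ 2 * (dw r ^+ 2 / r) by rewrite mulr_ge0 ?divr_ge0 ?sqr_ge0 ?ltW.
by rewrite /density mulrDr; split; lra.
Qed.

Lemma density_ge0 (r : R) : 0 < r -> 0 <= density r.
Proof.
move=> r0; have [+ _ _] := density_terms_le r0.
by apply: le_trans; rewrite divr_ge0 ?sqr_ge0 ?ltW.
Qed.

Lemma energyE : energy h u du dw d2w = E%:E.
Proof.
rewrite /E fineK // ge0_fin_numE // integral_ge0 // => r.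
by rewrite /= in_itv /= lee_fin => /andP[/density_ge0].
Qed.

Lemma energy_ge0 : 0 <= E.
Proof.
rewrite -lee_fin -energyE integral_ge0 // => r.
by rewrite /= in_itv /= lee_fin => /andP[/density_ge0].
Qed.

Lemma le_energy (D : set R) (g : R -> R) :
  (forall x, D x -> [/\ 0 < x < 1, 0 <= g x & g x <= density x]) ->
  (\int[mu]_(x in D) (g x)%:E <= E%:E)%E.
Proof.
move=> Dg; rewrite -energyE; apply: ge0_le_subset_integral.
- by move=> x /Dg[_ g0 _]; rewrite lee_fin.
- by move=> x; rewrite /= in_itv /= lee_fin => /andP[/density_ge0].
- by move=> x /Dg[x01 _ gd]; rewrite /= in_itv /= lee_fin.
Qed.

Lemma int_abs_dw_le_near0 (s : R) : 0 < s -> s < 1 ->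
  (\int[mu]_(x in `[0%R, s]) (`|dw x|)%:E <= (s / h * Num.sqrt E)%:E)%E.
Proof.
move=> s0 s1; have [_ [w_ac _]] := adm.
have mdw := loc_ac01_measurable_oc w_ac s0 s1.
have oc_pos x : `]0, s]%classic x -> 0 < x < 1.
  by rewrite /= in_itv /= => /andP[-> /le_lt_trans->].
have h2 : 0 < h ^+ 2 := exprn_gt0 _ h_gt0.
rewrite -integral_itv_obnd_cbnd; last first.
  by apply/measurable_EFinP; apply: measurableT_comp mdw.
have -> : s / h * Num.sqrt E = Num.sqrt (E * (s / h) ^+ 2).
  have sh0 : 0 <= s / h by rewrite divr_ge0 ?ltW.
  by rewrite sqrtrM ?energy_ge0 // sqrtr_sqr ger0_norm // mulrC.
apply: (@integral_abs_le_cauchy_schwarz _ _ _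
  (fun x => h ^+ 2 / x) (fun x => x / h ^+ 2)) => //.
- apply: measurable_funM => //; apply: measurable_fun_inv => // x.
  by move=> /oc_pos/andP[].
- exact: measurable_funM.
- move=> x /oc_pos/andP[x0 _]; split; first exact: divr_gt0.
  by field; rewrite !lt0r_neq0.
- apply: le_energy => x /oc_pos x01; have /andP[x0 _] := x01.
  have [_ _ dw_le] := density_terms_le x0.
  by rewrite mulrAC -mulrA; split => //; rewrite mulr_ge0 ?divr_ge0 ?sqr_ge0 // ltW.
- apply: (@le_trans _ _ (\int[mu]_(x in `[0%R, s]) (s / h ^+ 2)%:E)%E).
    apply: ge0_le_subset_integral => x; rewrite /= !in_itv /= => /andP[x0 xs].
    + by rewrite lee_fin divr_ge0 ?ltW.
    + by rewrite lee_fin divr_ge0 ?ltW.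
    + by rewrite xs ltW // lee_fin ler_pM2r ?invr_gt0.
  by rewrite integral_itv_cc_cst ?(ltW s0) // subr0 lee_fin expr_div_n expr2 mulrAC.
Qed.

Lemma exists_small_u (p q c : R) : 0 < p -> p <= q -> q < 1 -> 0 <= c ->
  E * q < c ^+ 2 * (q - p) -> exists2 x, p <= x <= q & `|u x| <= c.
Proof.
move=> p0 pq q1 c0 Ec; have q0 := lt_le_trans p0 pq.
have [//|no_x] := pselect (exists2 x, p <= x <= q & `|u x| <= c).
have : (\int[mu]_(x in `[p, q]) (c ^+ 2 / q)%:E <= E%:E)%E.
  apply: le_energy => x; rewrite /= in_itv /= => /andP[px xq].
  have x0 : 0 < x by exact: lt_le_trans px.
  have [ux _ _] := density_terms_le x0.
  have cu : c <= `|u x|.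
    rewrite leNgt; apply/negP => ucx; apply: no_x.
    by exists x; [rewrite px xq | exact: ltW].
  have cu2 : c ^+ 2 <= u x ^+ 2.
    by rewrite -(real_normK (num_real (u x))) ler_sqr ?nnegrE.
  split; first by rewrite x0 (le_lt_trans xq).
    by rewrite divr_ge0 ?sqr_ge0 ?ltW.
  apply: le_trans ux; rewrite ler_pdivrMr // mulrAC ler_pdivlMr //.
  have := sqr_ge0 c; nra.
rewrite integral_itv_cc_cst // lee_fin mulrAC ler_pdivrMr //.
lra.
Qed.

Lemma int_abs_tension_le {a b : R} : 0 < a -> a <= b -> b < 1 ->
  (\int[mu]_(x in `[a, b]) (`|du x + dw x ^+ 2 - 1|)%:E
    <= (Num.sqrt (E * (ln b - ln a)))%:E)%E.
Proof.
move=> a0 ab b1; have [u_ac [w_ac _]] := adm.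
have cc_pos x : `[a, b]%classic x -> 0 < x < 1.
  by rewrite /= in_itv /= => /andP[/(lt_le_trans a0)-> /le_lt_trans->].
apply: (@integral_abs_le_cauchy_schwarz _ _ _ id GRing.inv) => //.
- apply: measurable_funB => //; apply: measurable_funD.
    exact: (loc_ac01_measurable u_ac a0 ab b1).
  by apply: measurable_funX; exact: (loc_ac01_measurable w_ac a0 ab b1).
- by apply: measurable_fun_inv => // x /cc_pos/andP[].
- by move=> x /cc_pos/andP[x0 _]; rewrite mulfV ?lt0r_neq0.
- apply: le_energy => x /cc_pos x01; have /andP[x0 _] := x01.
  have [_ tension_le _] := density_terms_le x0.
  by split=> //; rewrite mulr_ge0 ?sqr_ge0 ?ltW.
- by rewrite integral_itv_inv.
Qed.

Lemma integrable_dw_sqr {a b : R} : 0 < a -> a <= b -> b < 1 ->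
  mu.-integrable `[a, b] (EFin \o (fun x => dw x ^+ 2)).
Proof.
move=> a0 ab b1; have [_ [w_ac _]] := adm.
have mdw2 : measurable_fun `[a, b] (fun x => dw x ^+ 2).
  by apply: measurable_funX; exact: (loc_ac01_measurable w_ac a0 ab b1).
have h2 : 0 < h ^+ 2 := exprn_gt0 _ h_gt0.
have hdw_int : mu.-integrable `[a, b] (EFin \o (fun x => h ^+ 2 * dw x ^+ 2)).
  apply/integrableP; split; first exact/measurable_EFinP/measurable_funM.
  under eq_integral => x _ do rewrite /comp abse_EFin.
  apply: le_lt_trans (ltry E); apply: le_energy => x.
  rewrite /= in_itv /= => /andP[ax xb]; have x0 := lt_le_trans a0 ax.
  have [_ _ dw_le] := density_terms_le x0.
  have hdw0 : 0 <= h ^+ 2 * dw x ^+ 2 := mulr_ge0 (sqr_ge0 _) (sqr_ge0 _).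
  rewrite x0 (le_lt_trans xb) // ger0_norm //; split=> //.
  apply: le_trans dw_le; rewrite ler_pM2l // ler_pdivlMr //.
  by rewrite ler_piMr ?sqr_ge0 // ltW // (le_lt_trans xb).
have hZ := integrableZl _ (h ^+ 2)^-1 hdw_int.
apply: eq_integrable (hZ _) => // x _.
by rewrite /= -EFinM mulrA mulVf ?mul1r ?lt0r_neq0.
Qed.

Lemma Rintegral_dw_sqr (a b : R) : 0 < a -> a <= b -> b < 1 ->
  \int[mu]_(x in `[a, b]) dw x ^+ 2
  = \int[mu]_(x in `[a, b]) (du x + dw x ^+ 2 - 1) - (u b - u a) + (b - a).
Proof.
move=> a0 ab b1; have [u_ac _] := adm.
have [du_int ->] := u_ac _ _ a0 ab b1.
have dw2_int := integrable_dw_sqr a0 ab b1.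
have sum_int : mu.-integrable `[a, b] (EFin \o (fun x => du x + dw x ^+ 2)).
  by apply: eq_integrable (integrableD _ du_int dw2_int) => // x _; rewrite /= EFinD.
have one : \int[mu]_(x in `[a, b]) (1 : R) = b - a.
  by rewrite /Rintegral integral_itv_cc_cst // mul1r.
rewrite RintegralB // ?RintegralD ?one //; last exact: integrable_itv_cc_cst.
lra.
Qed.

Lemma Rintegral_dw_sqr_le {a b c : R} : 0 < a -> a <= b -> b < 1 ->
  `|u a| <= c -> `|u b| <= c ->
  \int[mu]_(x in `[a, b]) dw x ^+ 2 <= Num.sqrt (E * (ln b - ln a)) + 2 * c + (b - a).
Proof.
move=> a0 ab b1 ua ub; have [u_ac [w_ac _]] := adm.
rewrite Rintegral_dw_sqr //.
have tension_int : mu.-integrable `[a, b] (EFin \o (fun x => du x + dw x ^+ 2 - 1)).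
  apply/integrableP; split.
    apply/measurable_EFinP; apply: measurable_funB => //; apply: measurable_funD.
      exact: (loc_ac01_measurable u_ac a0 ab b1).
    by apply: measurable_funX; exact: (loc_ac01_measurable w_ac a0 ab b1).
  under eq_integral do rewrite /comp abse_EFin.
  exact: le_lt_trans (int_abs_tension_le a0 ab b1) (ltry _).
have := Rintegral_le_integral_abs (measurable_itv _) tension_int
  (int_abs_tension_le a0 ab b1).
have := ler_norm (u a); have := ler_norm (- u b); rewrite normrN; lra.
Qed.

Lemma exists_itv_dw_sqr_le {s t : R} : 0 < s -> s <= t -> t <= 1 / 2 ->
  exists a b, [/\ 0 < a <= s, t <= b < 1 &
    \int[mu]_(x in `[a, b]) dw x ^+ 2 <= 5 * Num.sqrt (E * (1 + ln s^-1)) + 2 * t].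
Proof.
move=> s0 st t12; have E0 := energy_ge0; have t0 := lt_le_trans s0 st.
set c := 2 * Num.sqrt E + t / 4; set L := 1 + ln s^-1.
have c0 : 0 <= c by rewrite addr_ge0 ?mulr_ge0 ?sqrtr_ge0 ?divr_ge0 ?ltW.
(* the summand t / 4 keeps [3 * E < c ^+ 2] strict when E = 0 *)
have Ec : 3 * E < c ^+ 2.
  by rewrite /c sqrrD exprMn sqr_sqrtr //; have := sqrtr_ge0 E; nra.
have [a /andP[sa as_] ua] : exists2 a, s / 2 <= a <= s & `|u a| <= c.
  by apply: exists_small_u => //; nra.
have [b /andP[tb bt] ub] : exists2 b, t <= b <= 3 * t / 2 & `|u b| <= c.
  by apply: exists_small_u => //; nra.
have [a0 ab b1] : [/\ 0 < a, a <= b & b < 1] by split; lra.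
exists a, b; split; rewrite ?a0 ?as_ ?tb ?b1 //.
have sE : Num.sqrt E <= Num.sqrt (E * L).
  by rewrite ler_wsqrtr // ler_peMr // lerDl ln_ge0 // invf_ge1 //; lra.
have lnL : Num.sqrt (E * (ln b - ln a)) <= Num.sqrt (E * L).
  by rewrite ler_wsqrtr // ler_wpM2l // ln_sub_le //; lra.
have := Rintegral_dw_sqr_le a0 ab b1 ua ub; rewrite /c; lra.
Qed.

Lemma int_abs_dw_le_away0 (s t : R) : 0 < s -> s <= t -> t <= 1 / 2 ->
  (\int[mu]_(x in `[s, t]) (`|dw x|)%:E
    <= (3 * Num.sqrt t * Num.sqrt (Num.sqrt (1 + ln s^-1))
          * Num.sqrt (Num.sqrt E) + 2 * t)%:E)%E.
Proof.
move=> s0 st t12; have E0 := energy_ge0.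
have [a [b [/andP[a0 as_] /andP[tb b1] GL]]] := exists_itv_dw_sqr_le s0 st t12.
set G := \int[mu]_(x in `[a, b]) dw x ^+ 2 in GL.
have dw2_st : (\int[mu]_(x in `[s, t]) (dw x ^+ 2)%:E <= G%:E)%E.
  have ab := le_trans as_ (le_trans st tb).
  rewrite /G /Rintegral fineK; last first.
    exact: integrable_fin_num (integrable_dw_sqr a0 ab b1).
  apply: ge0_le_subset_integral => x; rewrite ?lee_fin ?sqr_ge0 //.
  by rewrite /= !in_itv /= => /andP[sx xt]; split=> //; apply/andP; split; lra.
have [_ [w_ac _]] := adm.
have mdw : measurable_fun `[s, t] dw by apply: (loc_ac01_measurable w_ac s0 st); lra.
apply: le_trans (@integral_abs_le_cauchy_schwarz _ _ _ (cst 1) (cst 1) G (t - s)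
  (measurable_itv _) mdw (measurable_cst _) (measurable_cst _) _ _ _) _.
- by move=> x _; rewrite mulr1.
- by under eq_integral do rewrite mul1r.
- by rewrite integral_itv_cc_cst // mul1r.
rewrite lee_fin -mulrA.
rewrite (_ : Num.sqrt (Num.sqrt _) * _ = Num.sqrt (Num.sqrt (E * (1 + ln s^-1)))).
  by apply: sqrt_mul_le_of_linear_bound; rewrite ?sqrtr_ge0 ?subr_ge0 ?st //=; lra.
by rewrite !sqrtrM ?sqrtr_ge0 // mulrC.
Qed.

End energy_bounds.
Arguments int_abs_dw_le_near0 {R delta h u w du dw d2w}.
Arguments int_abs_dw_le_away0 {R delta h u w du dw d2w}.

Theorem lemma3p5 (R : realType) :
  exists C : R, 0 < C /\
  forall (delta h s t : R) (u w du dw d2w : R -> R),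
    0 <= delta <= 1 ->
    0 < h <= 1 / 2 ->
    admissible delta u w du dw d2w ->
    (energy h u du dw d2w < +oo)%E ->
    0 < s -> s <= t -> t <= 1 / 2 ->
    let E := fine (energy h u du dw d2w) in
    (\int[lebesgue_measure]_(x in `[0%R, s]) (`|dw x|)%:E
       <= (s / h * Num.sqrt E)%:E)%E /\
    (\int[lebesgue_measure]_(x in `[s, t%R]) (`|dw x|)%:E
       <= (C * Num.sqrt t * Num.sqrt (Num.sqrt (1 + ln s^-1))
             * Num.sqrt (Num.sqrt E) + 2 * t)%:E)%E.
Proof.
exists 3; split => // delta h s t u w du dw d2w _ /andP[h0 _] adm fin s0 st t12.
split; first by apply: (int_abs_dw_le_near0 adm fin h0) => //; lra.
exact: (int_abs_dw_le_away0 adm fin h0).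
Qed.
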